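(* Let $\varphi$ be a condition and $Q_1,Q_2$ queries. For all ground multisets of facts $F,F'$ and all substitutions $\sigma$ such that $\sigma(\varphi)$, $\sigma(Q_1)$, $\sigma(Q_2)$ are closed: if $\mathrm{Init}_{\sigma(\varphi\Rightarrow(Q_1\oplus Q_2))}(F)\to^!\mathrm{Ans}(F')$ then $\mathrm{Init}_{\sigma((\varphi\Rightarrow Q_1)\oplus(\varphi\Rightarrow Q_2))}(F)\to^!\mathrm{Ans}(F')$; the converse implication does not hold in general. If moreover $\varphi$ is deterministic, then $(\varphi\Rightarrow Q_1)\oplus(\varphi\Rightarrow Q_2)\equiv\varphi\Rightarrow(Q_1\oplus Q_2)$.
   Context: Setting. Fix an order-sorted signature $\Sigma$ with sorts $\mathsf{Fact}$, $\mathsf{Bool}$ and a $\Sigma$-algebra of facts $\mathcal{D}$ presented by structural axioms $A$ and confluent terminating equations, providing Boolean connectives and Boolean-valued equality; every ground $\mathsf{Bool}$ term reduces to $\mathsf{true}$ or $\mathsf{false}$. Multisets of facts: associative commutative $\circ$ with identity $\emptyset$. A terminating and preserving pattern $P$ is $[F_1]_!\circ[F_2]_?$ or $[F_2]_?$ ($F_1,F_2$ non-empty, possibly non-ground, multisets of facts); $P_!,P_?$ are the wrapped multisets ($P_!=\emptyset$ if absent). Conditions: $\mathrm{False}$, $\{B\}$, $\neg\psi$, $\psi_1\vee\psi_2$, $\exists P.\psi$ (binding in $\psi$ the variables of $P$ not bound by the context). Condition-evaluation stacks consist of frames $\mathrm{Res}(B)$, $\mathrm{Not}$, $[\vec a]^{\vec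 v}_\psi$, $[\vec a]^{\vec v,\downarrow}_\psi$, $[F'\mid\vec a]^{\vec v}_{\exists P.\psi}$ ($\sigma=\{\vec a/\vec v\}$); rules (''$X\mapsto Y$'' meaning $\{F,S\,X\}^c\to\{F,S\,Y\}^c$, $F$ the database): $[\vec a]_{\mathrm{False}}\mapsto\mathrm{Res}(\mathsf{false})$; $[\vec a]_{\{B\}}\mapsto\mathrm{Res}(\sigma(B))$; $[\vec a]_{\neg\psi}\mapsto\mathrm{Not}[\vec a]_\psi$; $\mathrm{Not}\,\mathrm{Res}(B)\mapsto\mathrm{Res}(\neg B)$; $[\vec a]_{\psi_1\vee\psi_2}\mapsto[\vec a]^\downarrow_{\psi_1}[\vec a]_{\psi_2}$; $[\vec a]^\downarrow_\psi\mathrm{Res}(\mathsf{true})\mapsto\mathrm{Res}(\mathsf{true})$; $[\vec a]^\downarrow_\psi\mathrm{Res}(\mathsf{false})\mapsto[\vec a]_\psi$; $[\vec a]_{\exists P.\psi}\mapsto[F\mid\vec a]_{\exists P.\psi}$; if $\vec w$ lists the variables of $P$ not in $\vec v$, $\sigma'=\{\vec a/\vec v,\vec b/\vec w\}$, $F'=F''\circ\sigma'(P_!\circ P_?)$: $[F'\mid\vec a]_{\exists P.\psi}\mapsto[F''\circ\sigma'(P_!)\mid\vec a]_{\exists P.\psi}[\vec a,\vec b]^{\vec v,\vec w}_\psi$; $[F'\mid\vec a]_{\exists P.\psi}\mathrm{Res}(\mathsf{false})\mapsto[F'\mid\vec a]_{\exists P.\psi}$; $[F'\mid\vec a]_{\exists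 P.\psi}\mathrm{Res}(\mathsf{true})\mapsto\mathrm{Res}(\mathsf{true})$; if no matching of $F'$ exists, $[F'\mid\vec a]_{\exists P.\psi}\mapsto\mathrm{Res}(\mathsf{false})$. Queries: $\emptyset$; facts $f$; $Q_1\oplus Q_2$; $\varphi\Rightarrow Q$; $\mathrm{From}\,P.Q$ ($P$ terminating and preserving, binding like $\exists$). A query is closed if all its variables (in facts and conditions) are bound by enclosing patterns. The system $\mathcal{R}^{\mathrm{query}}_{\Sigma,\mathcal{D}}(Q)$: states $\{F,F',S\}^q$, terminal $\mathrm{Ans}(F')$; with ''$X\mapsto Y$'' meaning $\{F,F',S\,X\}^q\to\{F,F',S\,Y\}^q$: $\{F,F',S[\vec a]_f\}^q\to\{F,F'\circ\sigma(f),S\}^q$; $[\vec a]_\emptyset\mapsto$ (nothing); $[\vec a]_{R_1\oplus R_2}\mapsto[\vec a]_{R_2}[\vec a]_{R_1}$; $[\vec a]_{\varphi\Rightarrow R}\mapsto[\vec a\mid[\vec a]^{\vec v}_\varphi]_R$; $[\vec a\mid\mathrm{Res}(\mathsf{false})]_R\mapsto$ (nothing); $[\vec a\mid\mathrm{Res}(\mathsf{true})]_R\mapsto[\vec a]_R$; for each condition rule $\{F,S'\}^c\to\{F,S''\}^c$, $[\vec a\mid S']_R\mapsto[\vec a\mid S'']_R$; $[\vec a]_{\mathrm{From}\,P.R}\mapsto[F\mid\vec a]_{\mathrm{From}\,P.R}$; if $F''=H\circ\sigma'(P_!\circ P_?)$ then $[F''\mid\vec a]_{\mathrm{From}\,P.R}\mapsto[H\circ\sigma'(P_!)\mid\vec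 a]_{\mathrm{From}\,P.R}[\vec a,\vec b]^{\vec v,\vec w}_R$; if no matching exists, $[F''\mid\vec a]_{\mathrm{From}\,P.R}\mapsto$ (nothing); $\{F,F',\text{empty}\}^q\to\mathrm{Ans}(F')$. $\mathrm{Init}_Q(F):=\{F,\emptyset,[\,]_Q\}^q$; $t\to^!t'$ means $t\to^*t'$ with $t'$ irreducible. Logical equivalence of queries: $Q_1\equiv Q_2$ iff for all ground multisets $F,F'$ and ground substitutions $\sigma$ with $\sigma(Q_1),\sigma(Q_2)$ closed, $\mathrm{Init}_{\sigma(Q_1)}(F)\to^!\mathrm{Ans}(F')$ iff $\mathrm{Init}_{\sigma(Q_2)}(F)\to^!\mathrm{Ans}(F')$. A fully reduced fact term $t$ has the unique matching property if for every ground fully reduced fact $t'$ there is at most one substitution $\sigma$ with $\sigma(t)=t'$; a condition is deterministic if all its quantification patterns consist of a single fact with the unique matching property. *)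

From Stdlib Require Import Relations.
From mathcomp Require Import all_boot.
Set Implicit Arguments.
Unset Strict Implicit.
Unset Printing Implicit Defensive.

(* Abstract interface to the Sigma-algebra of facts D (presented by    *)
(* structural axioms and confluent terminating equations).             *)
(*  - var   : variables (of any data sort)                             *)
(*  - val   : ground, fully reduced data values                        *)
(*  - gfact : ground, fully reduced facts                              *)
(*  - fterm : (possibly non-ground) fact terms                         *)
(*  - bterm : (possibly non-ground) Bool terms                         *)
(*  fnf t is the normal form of t when t is ground (None otherwise);    *)
(*  bnf b is the value (true/false) of the ground Bool term b.          *)
Record factAlg := FactAlg {
  var : eqType;
  val : Type;
  gfact : eqType;
  fterm : Type;
  bterm : Type;
  fvars : fterm -> seq var;
  fsubst : (var -> option val) -> fterm -> fterm;
  fnf : fterm -> option gfact;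
  bvars : bterm -> seq var;
  bsubst : (var -> option val) -> bterm -> bterm;
  bnf : bterm -> option bool;
  fvars_subst : forall s t x,
    x \in fvars (fsubst s t) <-> (x \in fvars t /\ s x = None);
  fsubst_ext : forall s1 s2 t,
    (forall x, x \in fvars t -> s1 x = s2 x) -> fsubst s1 t = fsubst s2 t;
  fnf_ground : forall t, fnf t = None <-> fvars t <> [::];
  bvars_subst : forall s b x,
    x \in bvars (bsubst s b) <-> (x \in bvars b /\ s x = None);
  bsubst_ext : forall s1 s2 b,
    (forall x, x \in bvars b -> s1 x = s2 x) -> bsubst s1 b = bsubst s2 b;
  bnf_ground : forall b, bnf b = None <-> bvars b <> [::]
}.

Section Queries.
Variable A : factAlg.

(* ground (partial) substitutions / environments [a]^v : v |-> a *)
Definition env := var A -> option (val A).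
Definition env0 : env := fun _ => None.

(* A pattern [F1]_! o [F2]_? is the pair (F1, F2); F1 = [::] encodes   *)
(* an absent [_]_! part.                                               *)
Definition pattern := (seq (fterm A) * seq (fterm A))%type.
Definition pat_bang (P : pattern) := P.1.
Definition pat_quest (P : pattern) := P.2.
Definition pvars (P : pattern) : seq (var A) :=
  flatten (map (@fvars A) (P.1 ++ P.2)).

(* terminating and preserving: the [_]_? part is non-empty *)
Definition pat_tp (P : pattern) : Prop := P.2 <> [::].

Inductive cond :=
| CFalse
| CBool of bterm A
| CNot of cond
| COr of cond & cond
| CEx of pattern & cond.

Inductive query :=
| QEmpty
| QFact of fterm A
| QPlus of query & query
| QImp of cond & query
| QFrom of pattern & query.

Fixpoint cond_wf (c : cond) : Prop :=
  match c with
  | CFalse | CBool _ => True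
  | CNot c1 => cond_wf c1
  | COr c1 c2 => cond_wf c1 /\ cond_wf c2
  | CEx P c1 => pat_tp P /\ cond_wf c1
  end.

Fixpoint query_wf (q : query) : Prop :=
  match q with
  | QEmpty | QFact _ => True
  | QPlus q1 q2 => query_wf q1 /\ query_wf q2
  | QImp c q1 => cond_wf c /\ query_wf q1
  | QFrom P q1 => pat_tp P /\ query_wf q1
  end.

(* pattern).  Pattern variables are always bound (by that pattern or an *)
(* enclosing one), so patterns are left untouched.                     *)
Definition restrict (s : env) (bnd : seq (var A)) : env :=
  fun x => if x \in bnd then None else s x.

Fixpoint csubst_in (bnd : seq (var A)) (s : env) (c : cond) : cond :=
  match c with
  | CFalse => CFalse
  | CBool b => CBool (bsubst (restrict s bnd) b)
  | CNot c1 => CNot (csubst_in bnd s c1)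
  | COr c1 c2 => COr (csubst_in bnd s c1) (csubst_in bnd s c2)
  | CEx P c1 => CEx P (csubst_in (bnd ++ pvars P) s c1)
  end.

Fixpoint qsubst_in (bnd : seq (var A)) (s : env) (q : query) : query :=
  match q with
  | QEmpty => QEmpty
  | QFact f => QFact (fsubst (restrict s bnd) f)
  | QPlus q1 q2 => QPlus (qsubst_in bnd s q1) (qsubst_in bnd s q2)
  | QImp c q1 => QImp (csubst_in bnd s c) (qsubst_in bnd s q1)
  | QFrom P q1 => QFrom P (qsubst_in (bnd ++ pvars P) s q1)
  end.

Definition csubst (s : env) (c : cond) := csubst_in [::] s c.
Definition qsubst (s : env) (q : query) := qsubst_in [::] s q.

Fixpoint cclosed_in (bnd : seq (var A)) (c : cond) : bool :=
  match c with
  | CFalse => true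
  | CBool b => all (fun x => x \in bnd) (bvars b)
  | CNot c1 => cclosed_in bnd c1
  | COr c1 c2 => cclosed_in bnd c1 && cclosed_in bnd c2
  | CEx P c1 => cclosed_in (bnd ++ pvars P) c1
  end.

Fixpoint qclosed_in (bnd : seq (var A)) (q : query) : bool :=
  match q with
  | QEmpty => true
  | QFact f => all (fun x => x \in bnd) (fvars f)
  | QPlus q1 q2 => qclosed_in bnd q1 && qclosed_in bnd q2
  | QImp c q1 => cclosed_in bnd c && qclosed_in bnd q1
  | QFrom P q1 => qclosed_in (bnd ++ pvars P) q1
  end.

Definition cclosed (c : cond) := cclosed_in [::] c.
Definition qclosed (q : query) := qclosed_in [::] q.

Definition ginst (s : env) (t : fterm A) : option (gfact A) := fnf (fsubst s t).
Definition insts (s : env) (ts : seq (fterm A)) (gs : seq (gfact A)) : Prop :=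
  map (ginst s) ts = map Some gs.

(* sigma' = {a/v, b/w}, w = variables of P not in v; groundness of the *)
(* instance (required by insts below) forces b to be defined on w.     *)
Definition ext_env (e : env) (P : pattern) (b : env) : env :=
  fun x => match e x with
           | Some a => Some a
           | None => if x \in pvars P then b x else None
           end.

(* F' = F'' o sigma'(P_! o P_?) ; returns F'' o sigma'(P_!) and sigma' *)
Definition pmatch (e : env) (P : pattern) (F' : seq (gfact A))
    (e' : env) (Fnew : seq (gfact A)) : Prop :=
  exists (b : env) (F'' gb gq : seq (gfact A)),
    [/\ e' = ext_env e P b, insts e' P.1 gb, insts e' P.2 gq,
        perm_eq F' (F'' ++ gb ++ gq) & Fnew = F'' ++ gb].

Definition nomatch (e : env) (P : pattern) (F' : seq (gfact A)) : Prop :=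
  forall e' Fnew, ~ pmatch e P F' e' Fnew.

(* condition evaluation stacks; the head of the list is the TOP frame *)
Inductive cframe :=
| FRes of bool
| FNot
| FEval of env & cond
| FDown of env & cond
| FEx of seq (gfact A) & env & pattern & cond.

Inductive cstep (F : seq (gfact A)) : seq cframe -> seq cframe -> Prop :=
| cs_false e S : cstep F (FEval e CFalse :: S) (FRes false :: S)
| cs_bool e B bv S : bnf (bsubst e B) = Some bv ->
    cstep F (FEval e (CBool B) :: S) (FRes bv :: S)
| cs_not e c S : cstep F (FEval e (CNot c) :: S) (FEval e c :: FNot :: S)
| cs_notres bv S : cstep F (FRes bv :: FNot :: S) (FRes (~~ bv) :: S)
| cs_or e c1 c2 S :
    cstep F (FEval e (COr c1 c2) :: S) (FEval e c2 :: FDown e c1 :: S)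
| cs_down_true e c S : cstep F (FRes true :: FDown e c :: S) (FRes true :: S)
| cs_down_false e c S : cstep F (FRes false :: FDown e c :: S) (FEval e c :: S)
| cs_ex e P c S : cstep F (FEval e (CEx P c) :: S) (FEx F e P c :: S)
| cs_ex_match F' e P c S e' Fnew : pmatch e P F' e' Fnew ->
    cstep F (FEx F' e P c :: S) (FEval e' c :: FEx Fnew e P c :: S)
| cs_ex_false F' e P c S :
    cstep F (FRes false :: FEx F' e P c :: S) (FEx F' e P c :: S)
| cs_ex_true F' e P c S :
    cstep F (FRes true :: FEx F' e P c :: S) (FRes true :: S)
| cs_ex_nomatch F' e P c S : nomatch e P F' ->
    cstep F (FEx F' e P c :: S) (FRes false :: S).

(* query evaluation stacks; head = top *)
Inductive qframe :=
| QFEval of env & query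
| QFCond of env & seq cframe & query
| QFFrom of seq (gfact A) & env & pattern & query.

Inductive qstate :=
| QState of seq (gfact A) & seq qframe   (* {F, F', S}^q, F fixed *)
| QAns of seq (gfact A).

Inductive qstep (F : seq (gfact A)) : qstate -> qstate -> Prop :=
| qs_fact e f g out S : ginst e f = Some g ->
    qstep F (QState out (QFEval e (QFact f) :: S)) (QState (out ++ [:: g]) S)
| qs_empty e out S : qstep F (QState out (QFEval e QEmpty :: S)) (QState out S)
| qs_plus e q1 q2 out S :
    qstep F (QState out (QFEval e (QPlus q1 q2) :: S))
            (QState out (QFEval e q1 :: QFEval e q2 :: S))
| qs_imp e c q out S :
    qstep F (QState out (QFEval e (QImp c q) :: S))
            (QState out (QFCond e [:: FEval e c] q :: S))
| qs_cond_false e q out S :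
    qstep F (QState out (QFCond e [:: FRes false] q :: S)) (QState out S)
| qs_cond_true e q out S :
    qstep F (QState out (QFCond e [:: FRes true] q :: S))
            (QState out (QFEval e q :: S))
| qs_cond_step e S1 S2 q out S : cstep F S1 S2 ->
    qstep F (QState out (QFCond e S1 q :: S)) (QState out (QFCond e S2 q :: S))
| qs_from e P q out S :
    qstep F (QState out (QFEval e (QFrom P q) :: S))
            (QState out (QFFrom F e P q :: S))
| qs_from_match F'' e P q out S e' Fnew : pmatch e P F'' e' Fnew ->
    qstep F (QState out (QFFrom F'' e P q :: S))
            (QState out (QFEval e' q :: QFFrom Fnew e P q :: S))
| qs_from_nomatch F'' e P q out S : nomatch e P F'' ->
    qstep F (QState out (QFFrom F'' e P q :: S)) (QState out S)
| qs_done out : qstep F (QState out [::]) (QAns out).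

Definition qinit (q : query) : qstate := QState [::] [:: QFEval env0 q].

(* Init_Q(F) ->^! Ans(F')  (multisets compared up to permutation; Ans is *)
(* irreducible since no rule applies to it)                            *)
Definition qreach (F : seq (gfact A)) (q : query) (F' : seq (gfact A)) : Prop :=
  exists F'', perm_eq F'' F' /\ clos_refl_trans qstate (qstep F) (qinit q) (QAns F'').

Definition qequiv (q1 q2 : query) : Prop :=
  forall (F F' : seq (gfact A)) (s : env),
    qclosed (qsubst s q1) -> qclosed (qsubst s q2) ->
    (qreach F (qsubst s q1) F' <-> qreach F (qsubst s q2) F').

Definition unique_matching (t : fterm A) : Prop :=
  forall (s1 s2 : env) (g : gfact A),
    ginst s1 t = Some g -> ginst s2 t = Some g ->
    forall x, x \in fvars t -> s1 x = s2 x.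

Fixpoint cdet (c : cond) : Prop :=
  match c with
  | CFalse | CBool _ => True
  | CNot c1 => cdet c1
  | COr c1 c2 => cdet c1 /\ cdet c2
  | CEx P c1 =>
      (exists t, P = ([::], [:: t]) /\ unique_matching t) /\ cdet c1
  end.

End Queries.

From Stdlib Require Import Relations FunctionalExtensionality.
From mathcomp Require Import all_boot.
Set Implicit Arguments.
Unset Strict Implicit.
Unset Printing Implicit Defensive.

(* In phi => (Q1 (+) Q2) the condition is evaluated once, to some b, after which Q1 and
   Q2 run in sequence if b holds; replaying that single condition run twice gives a run
   of (phi => Q1) (+) (phi => Q2) with the same output.  In the latter the two copies of
   phi are evaluated independently, and they can disagree because pattern matching is
   nondeterministic: over the database {0}, with p(true) and p(false) both reducing to
   the fact 0, the condition Exists [p(x)]_?. {x} evaluates to true or to false, so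
   (phi => 1) (+) (phi => 2) can answer {1}, which phi => (1 (+) 2) cannot.
   For deterministic phi all terminating evaluations agree: runs of the condition
   machine are sound for a big-step semantics, and for a single-fact pattern with
   unique matching a failed match consumes a fact whose only match has been refuted, so
   an existential is true exactly when some fact yields a match satisfying the body. *)

#[local] Arguments rt_step {A R x y}.
#[local] Arguments rt_refl {A R x}.
#[local] Arguments rt_trans {A R x y z}.
#[local] Arguments clos_rt_rt1n {A R x y}.
#[local] Arguments clos_rt1n_rt {A R x y}.
#[local] Arguments clos_rt_rtn1 {A R x y}.
#[local] Arguments clos_rtn1_rt {A R x y}.

(** * Runs of the query machine *)

Section Evaluation.
Variables (A : factAlg) (F : seq (gfact A)).

Notation qrt := (clos_refl_trans (qstate A) (qstep F)).
Notation crt := (clos_refl_trans (seq (cframe A)) (cstep F)).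

Definition qruns (e : env A) (q : query A) (o o' : seq (gfact A)) : Prop :=
  qrt (QState o [:: QFEval e q]) (QState o' [::]).

Definition cond_evals (e : env A) (c : cond A) (b : bool) : Prop :=
  crt [:: FEval e c] [:: FRes A b].

(* [QAns o] goes to the state reached once the original stack is exhausted, so that
   every step is simulated by at most one step. *)
Definition qstate_cat (S : seq (qframe A)) (X : qstate A) : qstate A :=
  match X with QState o T => QState o (T ++ S) | QAns o => QState o S end.

Lemma qstep_cat S X Y : qstep F X Y -> qrt (qstate_cat S X) (qstate_cat S Y).
Proof. by case=> *; [| | | | | | | | | |exact: rt_refl]; apply: rt_step; constructor. Qed.

Lemma qrt_cat S X Y : qrt X Y -> qrt (qstate_cat S X) (qstate_cat S Y).
Proof.
elim=> [? ? /qstep_cat // | ? | ? ? ? _ H1 _ H2]; [exact: rt_refl | exact: rt_trans H1 H2].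
Qed.

Lemma qrt_QAns a X : qrt (QAns a) X -> X = QAns a.
Proof. by move/clos_rt_rt1n; case=> // Y Z Hs; inversion Hs. Qed.

Lemma qrt_nil o X : qrt (QState o [::]) X -> X = QState o [::] \/ X = QAns o.
Proof.
move/clos_rt_rt1n; case=> [|Y Z Hs /clos_rt1n_rt HY]; first by left.
by inversion Hs; subst; right; apply: qrt_QAns.
Qed.

Lemma qrt_nil_nil o o' : qrt (QState o [::]) (QState o' [::]) -> o' = o.
Proof. by case/qrt_nil => [[]|]. Qed.

Lemma qrt_cons_inv o fr T o' : qrt (QState o (fr :: T)) (QState o' [::]) ->
  exists2 Y, qstep F (QState o (fr :: T)) Y & qrt Y (QState o' [::]).
Proof.
move/clos_rt_rt1n; move E: (QState o' [::]) => Z H.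
by case: H E => [[_ ?] // | Y Z' Hs /clos_rt1n_rt HY _]; exists Y.
Qed.

Lemma qstep_top o fr T S Y : qstep F (QState o (fr :: T ++ S)) Y ->
  exists o2 T2, Y = QState o2 (T2 ++ S) /\ qstep F (QState o (fr :: T)) (QState o2 T2).
Proof.
move=> H; inversion H; subst; rewrite -?cat_cons.
all: by eexists _, _; split; [reflexivity | econstructor; eauto].
Qed.

Lemma qrt_cat_inv o T S o' : qrt (QState o (T ++ S)) (QState o' [::]) ->
  exists2 o1, qrt (QState o T) (QState o1 [::]) & qrt (QState o1 S) (QState o' [::]).
Proof.
move/clos_rt_rt1n; move Ei: (QState o (T ++ S)) => X; move Ef: (QState o' [::]) => Z H.
elim: H o T Ei Ef => [X' | X' Y Z' Hs HZ IH] o T EX EZ; subst.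
  by case: T EZ => [|//] [_ <-]; exists o; exact: rt_refl.
case: T Hs => [|fr T] Hs.
  by exists o; [exact: rt_refl | exact: rt_trans (rt_step Hs) (clos_rt1n_rt HZ)].
have [o2 [T2 [EY Hs2]]] := qstep_top Hs.
have [o1 H1 H2] := IH _ _ (esym EY) erefl.
by exists o1; first exact: rt_trans (rt_step Hs2) H1.
Qed.

Lemma qrt_cond_lift o e S1 S2 q R : crt S1 S2 ->
  qrt (QState o (QFCond e S1 q :: R)) (QState o (QFCond e S2 q :: R)).
Proof.
elim=> [? ? Hs | ? | ? ? ? _ H1 _ H2]; last exact: rt_trans H1 H2.
- exact/rt_step/qs_cond_step.
- exact: rt_refl.
Qed.

Lemma qrt_cond_inv o e S1 q o' : qrt (QState o [:: QFCond e S1 q]) (QState o' [::]) ->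
  exists b, crt S1 [:: FRes A b] /\ (if b then qruns e q o o' else o' = o).
Proof.
move/clos_rt_rt1n; move Ei: (QState o _) => X; move Ef: (QState o' [::]) => Z H.
elim: H S1 Ei Ef => [X' | X' Y Z' Hs HZ IH] S1 EX EZ; subst => //.
move/clos_rt1n_rt: HZ => HZ; inversion Hs; subst.
- by exists false; split; [exact: rt_refl | exact: qrt_nil_nil HZ].
- by exists true; split; first exact: rt_refl.
- have [b [Hc Hb]] := IH _ erefl erefl.
  by exists b; split=> //; apply: rt_trans Hc; apply: rt_step.
Qed.

Lemma qruns_impP e c q o o' : qruns e (QImp c q) o o' <->
  exists b, cond_evals e c b /\ (if b then qruns e q o o' else o' = o).
Proof.
split.
  by case/qrt_cons_inv => Y Hs HY; inversion Hs; subst; apply: qrt_cond_inv.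
case=> b [Hc Hb]; apply: rt_trans (rt_step (qs_imp _ _ _ _ _ _)) _.
apply: rt_trans (qrt_cond_lift _ _ _ _ Hc) _.
case: b Hb {Hc} => [Hq | ->].
- exact: rt_trans (rt_step (qs_cond_true _ _ _ _ _)) Hq.
- exact: rt_step (qs_cond_false _ _ _ _ _).
Qed.

Lemma qruns_plusP e q1 q2 o o' : qruns e (QPlus q1 q2) o o' <->
  exists2 o1, qruns e q1 o o1 & qruns e q2 o1 o'.
Proof.
split.
  case/qrt_cons_inv => Y Hs HY; inversion Hs; subst.
  exact: (qrt_cat_inv (T := [:: QFEval e q1])).
case=> o1 H1 H2; apply: rt_trans (rt_step (qs_plus _ _ _ _ _ _)) _.
exact: rt_trans (qrt_cat [:: QFEval e q2] H1) H2.
Qed.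

Lemma qruns_factP e f o o' : qruns e (QFact f) o o' <->
  exists2 g, ginst e f = Some g & o' = o ++ [:: g].
Proof.
split; last by case=> g Hg ->; apply/rt_step/qs_fact.
by case/qrt_cons_inv => Y Hs HY; inversion Hs; subst; exists g => //; apply: qrt_nil_nil.
Qed.

Lemma qrt_QAns_inv X a : qrt X (QAns a) -> X = QAns a \/ qrt X (QState a [::]).
Proof.
move/clos_rt_rtn1; move Ef: (QAns a) => Z H.
case: H Ef => [_ | Y Z' Hs /clos_rtn1_rt HY EZ]; [by left | right; subst].
by inversion Hs; subst.
Qed.

Lemma qreachP q F' : qreach F q F' <-> exists2 o, perm_eq o F' & qruns (@env0 A) q [::] o.
Proof.
split=> [[o [Ho /qrt_QAns_inv [//|]]] | [o Ho Hq]]; first by exists o.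
by exists o; split=> //; apply: rt_trans Hq (rt_step (qs_done _ _)).
Qed.

Lemma qreach_sub q1 q2 F' :
  (forall o, qruns (@env0 A) q1 [::] o -> qruns (@env0 A) q2 [::] o) ->
  qreach F q1 F' -> qreach F q2 F'.
Proof. by move=> sub /qreachP [o Ho /sub Hq]; apply/qreachP; exists o. Qed.

Lemma qruns_imp_plus e c q1 q2 o o' :
  qruns e (QImp c (QPlus q1 q2)) o o' -> qruns e (QPlus (QImp c q1) (QImp c q2)) o o'.
Proof.
case/qruns_impP => -[] [Hc Hq]; apply/qruns_plusP.
- case/qruns_plusP: Hq => o1 H1 H2.
  by exists o1; apply/qruns_impP; exists true.
- by rewrite Hq; exists o; apply/qruns_impP; exists false.
Qed.

Lemma qruns_plus_imp e c q1 q2 o o' :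
  (forall b1 b2, cond_evals e c b1 -> cond_evals e c b2 -> b1 = b2) ->
  qruns e (QPlus (QImp c q1) (QImp c q2)) o o' -> qruns e (QImp c (QPlus q1 q2)) o o'.
Proof.
move=> c_det /qruns_plusP [o1 /qruns_impP [b [Hc Hb1]] /qruns_impP [b' [Hc' Hb2]]].
apply/qruns_impP; exists b; split=> //.
move: Hb2; rewrite -(c_det _ _ Hc Hc'); case: b Hb1 {Hc Hc'} => [H1 H2 | -> //].
by apply/qruns_plusP; exists o1.
Qed.

(** * Big-step semantics of conditions *)

Inductive ceval : env A -> cond A -> bool -> Prop :=
| ceval_false e : ceval e (CFalse A) false
| ceval_bool e B b : bnf (bsubst e B) = Some b -> ceval e (CBool B) b
| ceval_not e c b : ceval e c b -> ceval e (CNot c) (~~ b)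
| ceval_or_true e c1 c2 : ceval e c2 true -> ceval e (COr c1 c2) true
| ceval_or_false e c1 c2 b : ceval e c2 false -> ceval e c1 b -> ceval e (COr c1 c2) b
| ceval_ex e P c b : ex_eval F e P c b -> ceval e (CEx P c) b
with ex_eval : seq (gfact A) -> env A -> pattern A -> cond A -> bool -> Prop :=
| ex_eval_nomatch L e P c : nomatch e P L -> ex_eval L e P c false
| ex_eval_found L e P c e' L' :
    pmatch e P L e' L' -> ceval e' c true -> ex_eval L e P c true
| ex_eval_next L e P c e' L' b :
    pmatch e P L e' L' -> ceval e' c false -> ex_eval L' e P c b -> ex_eval L e P c b.

(* [ceval_cont K v r]: the value [v] returned to the frames [K] yields [r]. *)
Inductive ceval_cont : seq (cframe A) -> bool -> bool -> Prop :=
| ceval_cont_nil v : ceval_cont [::] v v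
| ceval_cont_not K v r : ceval_cont K (~~ v) r -> ceval_cont (FNot A :: K) v r
| ceval_cont_down_true K e c r :
    ceval_cont K true r -> ceval_cont (FDown e c :: K) true r
| ceval_cont_down_false K e c b r :
    ceval e c b -> ceval_cont K b r -> ceval_cont (FDown e c :: K) false r
| ceval_cont_ex_true K L e P c r :
    ceval_cont K true r -> ceval_cont (FEx L e P c :: K) true r
| ceval_cont_ex_false K L e P c b r :
    ex_eval L e P c b -> ceval_cont K b r -> ceval_cont (FEx L e P c :: K) false r.

Definition ceval_stack (S : seq (cframe A)) (r : bool) : Prop :=
  match S with
  | FRes v :: K => ceval_cont K v r
  | FEval e c :: K => exists2 v, ceval e c v & ceval_cont K v r
  | FEx L e P c :: K => exists2 v, ex_eval L e P c v & ceval_cont K v r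
  | _ => False
  end.

Lemma cstep_ceval_stack S S' r : cstep F S S' -> ceval_stack S' r -> ceval_stack S r.
Proof.
case=> /=.
- by move=> e K H; exists false => //; constructor.
- by move=> e B b K Hb H; exists b => //; constructor.
- move=> e c K [v Hv Hk]; inversion Hk; subst.
  by exists (~~ v) => //; constructor.
- by move=> b K H; constructor.
- move=> e c1 c2 K [v Hv Hk].
  inversion Hk as [| | ? ? ? ? Hk1 | ? ? ? b1 ? Hb1 Hk1 | |]; subst.
  + by exists true => //; constructor.
  + by exists b1 => //; apply: ceval_or_false Hv Hb1.
- by move=> e c K H; constructor.
- by move=> e c K [v Hv Hk]; apply: ceval_cont_down_false Hv Hk.
- by move=> e P c K [v Hv Hk]; exists v => //; constructor.
- move=> L e P c K e' L' Hm [v Hv Hk].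
  inversion Hk as [| | | | ? ? ? ? ? ? Hk1 | ? ? ? ? ? b1 ? Hb1 Hk1]; subst.
  + by exists true => //; apply: ex_eval_found Hm Hv.
  + by exists b1 => //; apply: ex_eval_next Hm Hv Hb1.
- by move=> L e P c K [v Hv Hk]; apply: ceval_cont_ex_false Hv Hk.
- by move=> L e P c K H; constructor.
- by move=> L e P c K Hn H; exists false => //; constructor.
Qed.

Lemma cond_evals_ceval e c b : cond_evals e c b -> ceval e c b.
Proof.
have back S S' : crt S S' -> forall r, ceval_stack S' r -> ceval_stack S r.
  elim=> [? ? /cstep_ceval_stack // | // | ? ? ? _ H1 _ H2 r H].
  exact/H1/H2.
by move/back/(_ b (ceval_cont_nil b)) => [v Hv Hk]; inversion Hk; subst.
Qed.

Local Notation single t := (([::], [:: t]) : pattern A).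

Definition match_sat (e : env A) (t : fterm A) (c : cond A) (L : seq (gfact A)) :=
  exists e' L', pmatch e (single t) L e' L' /\ ceval e' c true.

Lemma pmatch_single_inv e t L e' L' : pmatch e (single t) L e' L' ->
  exists b g, [/\ e' = ext_env e (single t) b, ginst e' t = Some g &
                  perm_eq L (L' ++ [:: g])].
Proof.
case=> b [L'' [gb [gq [-> Hb Hq HL ->]]]].
case: gb Hb HL => // _; case: gq Hq => [|g [|//]] //= [Hg] HL.
by exists b, g; rewrite cats0.
Qed.

Lemma pmatch_single_rem e t b g L :
  ginst (ext_env e (single t) b) t = Some g -> g \in L ->
  pmatch e (single t) L (ext_env e (single t) b) (rem g L).
Proof.
move=> Hg gL; exists b, (rem g L), [::], [:: g]; split=> //.
- by rewrite /insts /= Hg.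
- by rewrite cat0s perm_sym perm_catC perm_sym perm_to_rem.
- by rewrite cats0.
Qed.

Lemma match_sat_sub e t c L L' :
  {subset L <= L'} -> match_sat e t c L -> match_sat e t c L'.
Proof.
move=> sLL' [_ [L1 [/pmatch_single_inv [b [g [-> Hg HL]]] Hc]]].
exists (ext_env e (single t) b), (rem g L'); split=> //.
apply: pmatch_single_rem Hg _; apply: sLL'.
by rewrite (perm_mem HL) mem_cat mem_seq1 eqxx orbT.
Qed.

Lemma ext_env_unique e t b1 b2 g : unique_matching t ->
  ginst (ext_env e (single t) b1) t = Some g ->
  ginst (ext_env e (single t) b2) t = Some g ->
  ext_env e (single t) b1 = ext_env e (single t) b2.
Proof.
move=> t_um H1 H2; apply: functional_extensionality => x.
case tx: (x \in fvars t); first exact: t_um H1 H2 x tx.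
by rewrite /ext_env /pvars /= cats0 tx.
Qed.

Lemma ex_eval_single L e t c b : unique_matching t ->
  (forall e' b1 b2, ceval e' c b1 -> ceval e' c b2 -> b1 = b2) ->
  ex_eval L e (single t) c b -> b = true <-> match_sat e t c L.
Proof.
move=> t_um; move Et: (single t) => P c_det H.
elim: H Et c_det => {L e P c b}
  [L e P c Hn | L e P c e' L' Hm Hc | L e P c e1 L1 b Hm Hc _ IH] Et c_det; subst P.
- by split=> // -[e' [L' [/Hn]]].
- by split=> // _; exists e', L'.
- apply: iff_trans (IH erefl c_det) _.
  have [b1 [g1 [E1 Hg1 HL]]] := pmatch_single_inv Hm; subst e1.
  split; first by apply: match_sat_sub => x; rewrite (perm_mem HL) mem_cat => ->.
  case=> _ [L2 [/pmatch_single_inv [b2 [g2 [-> Hg2 HL2]]] Hc2]].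
  have [Eg | Ng] := eqVneq g2 g1.
    (* by unique matching, the only match through g1 is the refuted one *)
    move: Hc; rewrite Eg in Hg2; rewrite (ext_env_unique t_um Hg1 Hg2).
    by move/(c_det _ _ _ Hc2).
  exists (ext_env e (single t) b2), (rem g2 L1); split=> //; apply: pmatch_single_rem Hg2 _.
  have: g2 \in L by rewrite (perm_mem HL2) mem_cat mem_seq1 eqxx orbT.
  by rewrite (perm_mem HL) mem_cat mem_seq1 (negbTE Ng) orbF.
Qed.

Lemma ceval_det c : cdet c -> forall e b1 b2, ceval e c b1 -> ceval e c b2 -> b1 = b2.
Proof.
elim: c => [|B|c IH|c1 IH1 c2 IH2|P c IH] /= c_det e b1 b2 H1 H2.
- by inversion H1; inversion H2.
- by inversion H1; inversion H2; congruence.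
- inversion H1 as [| | ? ? v1 Hv1 | | |]; inversion H2 as [| | ? ? v2 Hv2 | | |].
  by rewrite (IH c_det _ _ _ Hv1 Hv2).
- case: c_det => det1 det2.
  inversion H1 as [| | | ? ? ? Ht1 | ? ? ? ? Hf1 Hb1 |];
  inversion H2 as [| | | ? ? ? Ht2 | ? ? ? ? Hf2 Hb2 |] => //.
  + by have := IH2 det2 _ _ _ Ht1 Hf2.
  + by have := IH2 det2 _ _ _ Hf1 Ht2.
  + exact: IH1 det1 _ _ _ Hb1 Hb2.
- case: c_det => -[t [EP t_um]] c_det; subst P.
  inversion H1 as [| | | | | ? ? ? ? Hx1]; inversion H2 as [| | | | | ? ? ? ? Hx2].
  have E1 := ex_eval_single t_um (IH c_det) Hx1.
  have E2 := ex_eval_single t_um (IH c_det) Hx2.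
  by apply/idP/idP => [/E1/E2 | /E2/E1].
Qed.

Lemma cond_evals_det c e b1 b2 :
  cdet c -> cond_evals e c b1 -> cond_evals e c b2 -> b1 = b2.
Proof. by move=> c_det /cond_evals_ceval H1 /cond_evals_ceval; apply: ceval_det. Qed.

End Evaluation.

Lemma cdet_csubst_in (A : factAlg) (c : cond A) bnd s : cdet c -> cdet (csubst_in bnd s c).
Proof.
elim: c bnd => [|B|c IH|c1 IH1 c2 IH2|P c IH] bnd //=.
- exact: IH.
- by case=> det1 det2; split; [exact: IH1 | exact: IH2].
- by case=> P_single c_det; split; last exact: IH.
Qed.

(** * A condition with two outcomes *)

(* The fact term [inr None] is p(x) for the only variable
   x : bool, and p(true), p(false) both reduce to the fact [0]: p(x) lacks the unique
   matching property.  The Bool term [None] is x. *)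
Definition cx_fvars (t : nat + option bool) : seq unit :=
  if t is inr None then [:: tt] else [::].
Definition cx_fsubst (s : unit -> option bool) (t : nat + option bool) :=
  if t is inr None then (if s tt is Some v then inr (Some v) else t) else t.
Definition cx_fnf (t : nat + option bool) : option nat :=
  match t with inl n => Some n | inr None => None | inr (Some _) => Some 0 end.
Definition cx_bvars (b : option bool) : seq unit := if b is None then [:: tt] else [::].
Definition cx_bsubst (s : unit -> option bool) (b : option bool) :=
  if b is Some v then Some v else s tt.

Lemma cx_fvars_subst s t x :
  x \in cx_fvars (cx_fsubst s t) <-> x \in cx_fvars t /\ s x = None.
Proof. by case: x; case: t => [n|[v|]] /=; last case: (s tt); split=> // -[]. Qed.

Lemma cx_fsubst_ext s1 s2 t :
  (forall x, x \in cx_fvars t -> s1 x = s2 x) -> cx_fsubst s1 t = cx_fsubst s2 t.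
Proof. by case: t => [n|[v|]] //= H; rewrite (H tt) ?mem_seq1. Qed.

Lemma cx_fnf_ground t : cx_fnf t = None <-> cx_fvars t <> [::].
Proof. by case: t => [n|[v|]]. Qed.

Lemma cx_bvars_subst s b x :
  x \in cx_bvars (cx_bsubst s b) <-> x \in cx_bvars b /\ s x = None.
Proof. by case: x; case: b => [v|] /=; last case: (s tt); split=> // -[]. Qed.

Lemma cx_bsubst_ext s1 s2 b :
  (forall x, x \in cx_bvars b -> s1 x = s2 x) -> cx_bsubst s1 b = cx_bsubst s2 b.
Proof. by case: b => [v|] //= H; rewrite (H tt) ?mem_seq1. Qed.

Lemma cx_bnf_ground (b : option bool) : b = None <-> cx_bvars b <> [::].
Proof. by case: b. Qed.

Definition CX : factAlg :=
  FactAlg cx_fvars_subst cx_fsubst_ext cx_fnf_ground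
          cx_bvars_subst cx_bsubst_ext cx_bnf_ground.

Definition cx_pat : pattern CX := ([::], [:: (inr None : fterm CX)]).
Definition cx_phi : cond CX := CEx cx_pat (CBool (None : bterm CX)).
Definition cx_Q1 : query CX := QFact (inl 1 : fterm CX).
Definition cx_Q2 : query CX := QFact (inl 2 : fterm CX).

Lemma cx_pmatch b v L : b tt = Some v ->
  pmatch (@env0 CX) cx_pat (0 :: L) (ext_env (@env0 CX) cx_pat b) L.
Proof.
move=> Hb; exists b, L, [::], [:: 0]; split=> //.
- by rewrite /insts /= /ginst /= /ext_env /= Hb.
- by rewrite /= perm_sym perm_catC.
- by rewrite cats0.
Qed.

Lemma cx_nomatch : nomatch (@env0 CX) cx_pat [::].
Proof.
by move=> e' L /pmatch_single_inv [b [g [_ _ /perm_size]]]; rewrite size_cat addn1.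
Qed.

Lemma cx_phi_true : cond_evals [:: 0 : gfact CX] (@env0 CX) cx_phi true.
Proof.
apply: rt_trans (rt_step (cs_ex _ _ _ _ _)) _.
have Hm := @cx_pmatch (fun _ => Some true) _ [::] erefl.
apply: rt_trans (rt_step (cs_ex_match _ _ _ Hm)) _.
apply: rt_trans (rt_step (@cs_bool _ _ _ _ true _ _)) _; first by [].
exact/rt_step/cs_ex_true.
Qed.

Lemma cx_phi_false : cond_evals [:: 0 : gfact CX] (@env0 CX) cx_phi false.
Proof.
apply: rt_trans (rt_step (cs_ex _ _ _ _ _)) _.
have Hm := @cx_pmatch (fun _ => Some false) _ [::] erefl.
apply: rt_trans (rt_step (cs_ex_match _ _ _ Hm)) _.
apply: rt_trans (rt_step (@cs_bool _ _ _ _ false _ _)) _; first by [].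
apply: rt_trans (rt_step (cs_ex_false _ _ _ _ _ _)) _.
exact/rt_step/cs_ex_nomatch/cx_nomatch.
Qed.

Lemma cx_split_reach :
  qreach [:: 0 : gfact CX] (QPlus (QImp cx_phi cx_Q1) (QImp cx_phi cx_Q2)) [:: 1].
Proof.
apply/qreachP; exists [:: 1] => //; apply/qruns_plusP; exists [:: 1]; apply/qruns_impP.
- by exists true; split; [exact: cx_phi_true | apply/qruns_factP; exists 1].
- by exists false; split; first exact: cx_phi_false.
Qed.

Lemma cx_joint_unreach :
  ~ qreach [:: 0 : gfact CX] (QImp cx_phi (QPlus cx_Q1 cx_Q2)) [:: 1].
Proof.
case/qreachP => o Ho /qruns_impP [[] [_ Ho']]; last by rewrite Ho' in Ho.
by case/qruns_plusP: Ho' Ho => o1 /qruns_factP [_ [<-] ->] /qruns_factP [_ [<-] ->].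
Qed.

Theorem lemma12 :
  (* (1) phi => (Q1 (+) Q2)  implies  (phi => Q1) (+) (phi => Q2) *)
  (forall (A : factAlg) (phi : cond A) (Q1 Q2 : query A),
     cond_wf phi -> query_wf Q1 -> query_wf Q2 ->
     forall (F F' : seq (gfact A)) (s : env A),
       cclosed (csubst s phi) -> qclosed (qsubst s Q1) -> qclosed (qsubst s Q2) ->
       qreach F (qsubst s (QImp phi (QPlus Q1 Q2))) F' ->
       qreach F (qsubst s (QPlus (QImp phi Q1) (QImp phi Q2))) F')
  /\
  (* (2) the converse does not hold in general *)
  ~ (forall (A : factAlg) (phi : cond A) (Q1 Q2 : query A),
       cond_wf phi -> query_wf Q1 -> query_wf Q2 ->
       forall (F F' : seq (gfact A)) (s : env A),
         cclosed (csubst s phi) -> qclosed (qsubst s Q1) -> qclosed (qsubst s Q2) ->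
         qreach F (qsubst s (QPlus (QImp phi Q1) (QImp phi Q2))) F' ->
         qreach F (qsubst s (QImp phi (QPlus Q1 Q2))) F')
  /\
  (* (3) equivalence for deterministic conditions *)
  (forall (A : factAlg) (phi : cond A) (Q1 Q2 : query A),
     cond_wf phi -> query_wf Q1 -> query_wf Q2 -> cdet phi ->
     qequiv (QPlus (QImp phi Q1) (QImp phi Q2)) (QImp phi (QPlus Q1 Q2))).
Proof.
split; [|split].
- move=> A phi Q1 Q2 _ _ _ F F' s _ _ _.
  by apply: qreach_sub => o; apply: qruns_imp_plus.
- have phi_wf : cond_wf cx_phi by [].
  move/(_ CX cx_phi cx_Q1 cx_Q2 phi_wf I I [:: 0] [:: 1] (@env0 CX) erefl erefl erefl).
  by move/(_ cx_split_reach); apply: cx_joint_unreach.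
- move=> A phi Q1 Q2 _ _ _ phi_det F F' s _ _.
  split; apply: qreach_sub => o; last exact: qruns_imp_plus.
  apply: qruns_plus_imp => b1 b2.
  exact: cond_evals_det (cdet_csubst_in _ _ phi_det).
Qed.
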